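(* For every integer $t\ge 0$, $F_{3t+2,\,2t+2}=1$ and $F_{5t+4,\,2t+2}=1$.
   Context: Define maps $G,S:\mathbb Z^2\to\mathbb Z^2$ by $G(x,y)=(x+y,y)$ and $S(x,y)=(3x-2y+1,\,2x-y+1)$. Define the array $(F_{n,k})_{n,k\ge 0}$ by $F_{0,0}=1$ and, for $(n,k)\neq(0,0)$, $F_{n,k}$ is the number of finite words $w=w_1w_2\cdots w_m$ ($m\ge 0$) over the alphabet $\{G,S\}$ with $w_1\circ w_2\circ\cdots\circ w_m(1,1)=(n,k)$ (the empty word acts as the identity). Equivalently: start with all entries $0$, set $F_{0,0}=1$ and $F_{1,1}=1$, and thereafter, whenever an entry $F_{n,k}$ with $n\ge 1$ changes its value, increase $F_{n+k,k}$ and $F_{3n+1-2k,\,2n+1-k}$ by $1$. *)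

From Stdlib Require Import ZArith List Bool.
Import ListNotations.
Open Scope Z_scope.

Definition Gmap (p : Z * Z) : Z * Z := (fst p + snd p, snd p).
Definition Smap (p : Z * Z) : Z * Z :=
  (3 * fst p - 2 * snd p + 1, 2 * fst p - snd p + 1).

Inductive letter : Type := LG | LS.

Definition act (a : letter) : Z * Z -> Z * Z :=
  match a with LG => Gmap | LS => Smap end.

(* w_1 o w_2 o ... o w_m applied to (1,1): w_m is applied first.
   The empty word acts as the identity. *)
Definition eval_word (w : list letter) : Z * Z :=
  fold_right act (1, 1) w.

(* F_val n k m  <->  F_{n,k} = m, where F_{0,0} = 1 and otherwise F_{n,k}
   is the (finite) number of words w with eval_word w = (n,k): there is a
   duplicate-free list enumerating exactly these words, of length m. *)
Definition F_val (n k : Z) (m : nat) : Prop :=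
  if andb (n =? 0) (k =? 0) then m = 1%nat
  else exists s : list (list letter),
         NoDup s /\ (forall w, In w s <-> eval_word w = (n, k)) /\ length s = m.

(* Every reachable point (x, y) satisfies 1 <= y <= x, and both G and S are
   injective, so a word reaching a point is determined letter by letter from
   the outside in: at each step at most one of the two preimages lies in the
   cone.  For (3t+2, 2t+2) the G-preimage leaves the cone and the S-preimage
   is (t+1, 1); for (5t+4, 2t+2) the S-preimage leaves the cone and the
   G-preimage is (3t+2, 2t+2); and (t+1, 1) is reached by G^t only. *)

From Stdlib Require Import ZArith List Lia.
Import ListNotations.
Open Scope Z_scope.

Definition in_cone (p : Z * Z) : Prop := 1 <= snd p <= fst p.

Definition unact (a : letter) (p : Z * Z) : Z * Z :=
  let (n, k) := p in
  match a with
  | LG => (n - k, k)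
  | LS => (2 * k - n - 1, 3 * k - 2 * n - 1)
  end.

Definition unique_word (p : Z * Z) (w : list letter) : Prop :=
  forall v, eval_word v = p <-> v = w.

Lemma letter_eq_dec (a b : letter) : {a = b} + {a <> b}.
Proof. decide equality. Qed.

Lemma eval_word_cons (a : letter) (w : list letter) :
  eval_word (a :: w) = act a (eval_word w).
Proof. reflexivity. Qed.

Lemma act_eq_iff (a : letter) (p q : Z * Z) : act a q = p <-> q = unact a p.
Proof.
  destruct a, p as [n k], q as [x y]; unfold act, unact, Gmap, Smap;
    cbn [fst snd]; rewrite !pair_equal_spec; lia.
Qed.

Lemma eval_word_in_cone (w : list letter) : in_cone (eval_word w).
Proof.
  unfold in_cone; induction w as [|a w IH]; [cbn; lia|].
  rewrite eval_word_cons; destruct (eval_word w) as [x y], a;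
    cbn [act Gmap Smap fst snd] in *; lia.
Qed.

Lemma unique_word_cons (a : letter) (p q : Z * Z) (w : list letter) :
  p <> (1, 1) -> unact a p = q ->
  (forall b, b <> a -> ~ in_cone (unact b p)) ->
  unique_word q w -> unique_word p (a :: w).
Proof.
  intros Hp Hq Hother Hw v; split.
  - destruct v as [|b v]; [intros H; now destruct Hp|].
    rewrite eval_word_cons, act_eq_iff; intros Hv.
    destruct (letter_eq_dec b a) as [->|Hba].
    + subst q; now rewrite (proj1 (Hw v) Hv).
    + destruct (Hother b Hba); rewrite <- Hv; apply eval_word_in_cone.
  - intros ->; rewrite eval_word_cons, act_eq_iff, Hq; now apply Hw.
Qed.

Lemma unique_word_nil : unique_word (1, 1) [].
Proof.
  intros [|a v]; split; try easy.
  rewrite eval_word_cons, act_eq_iff; intros Hv.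
  pose proof (eval_word_in_cone v) as Hc; rewrite Hv in Hc.
  unfold in_cone in Hc; destruct a; cbn [unact fst snd] in Hc; lia.
Qed.

Lemma unique_word_G_power (t : nat) :
  unique_word (Z.of_nat t + 1, 1) (repeat LG t).
Proof.
  induction t as [|t IH]; [exact unique_word_nil|].
  apply (unique_word_cons LG _ (Z.of_nat t + 1, 1)).
  - rewrite pair_equal_spec; lia.
  - cbn [unact]; f_equal; lia.
  - intros [] Hb; [easy|]; unfold in_cone; cbn [unact fst snd]; lia.
  - exact IH.
Qed.

Lemma unique_word_S_G_power (t : nat) :
  unique_word (3 * Z.of_nat t + 2, 2 * Z.of_nat t + 2) (LS :: repeat LG t).
Proof.
  apply (unique_word_cons LS _ (Z.of_nat t + 1, 1)).
  - rewrite pair_equal_spec; lia.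
  - cbn [unact]; f_equal; lia.
  - intros [] Hb; [|easy]; unfold in_cone; cbn [unact fst snd]; lia.
  - apply unique_word_G_power.
Qed.

Lemma unique_word_G_S_G_power (t : nat) :
  unique_word (5 * Z.of_nat t + 4, 2 * Z.of_nat t + 2) (LG :: LS :: repeat LG t).
Proof.
  apply (unique_word_cons LG _ (3 * Z.of_nat t + 2, 2 * Z.of_nat t + 2)).
  - rewrite pair_equal_spec; lia.
  - cbn [unact]; f_equal; lia.
  - intros [] Hb; [easy|]; unfold in_cone; cbn [unact fst snd]; lia.
  - apply unique_word_S_G_power.
Qed.

Lemma F_val_one_of_unique_word (n k : Z) (w : list letter) :
  k <> 0 -> unique_word (n, k) w -> F_val n k 1.
Proof.
  intros Hk Hw; unfold F_val.
  rewrite (proj2 (Z.eqb_neq k 0) Hk), Bool.andb_false_r.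
  exists [w]; repeat split.
  - repeat constructor; easy.
  - intros [<-|[]]; now apply Hw.
  - intros Hv; left; symmetry; now apply Hw.
Qed.

Theorem corollary15 : forall t : nat,
  F_val (3 * Z.of_nat t + 2) (2 * Z.of_nat t + 2) 1 /\
  F_val (5 * Z.of_nat t + 4) (2 * Z.of_nat t + 2) 1.
Proof.
  intros t; split.
  - apply (F_val_one_of_unique_word _ _ (LS :: repeat LG t)); [lia|].
    apply unique_word_S_G_power.
  - apply (F_val_one_of_unique_word _ _ (LG :: LS :: repeat LG t)); [lia|].
    apply unique_word_G_S_G_power.
Qed.
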